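(* Let $A$ be a finite set of vertices of a graph $\Gamma$. Then there exists a subset $B\subseteq A$ with $|B|\le\tfrac34|A|$ such that $$\operatorname{sw}(A)\le\operatorname{Bisec}(A)+\operatorname{sw}(B).$$
   Context: For disjoint vertex sets $B_1,B_2$, $E(B_1,B_2)$ is the set of edges between them. A sweepout $\mathfrak F$ of a finite vertex set $A$ is a nested sequence $\emptyset=F_0\subseteq F_1\subseteq\dots\subseteq F_{|A|}=A$ with $|F_j|=j$; its width is $\operatorname{w}(\mathfrak F)=\max_j|E(F_j,A\setminus F_j)|$, and $\operatorname{sw}(A)$ is the minimum width over all sweepouts of $A$. $\operatorname{Bisec}(A)=\min|E(B_1,B_2)|$ over all decompositions $A=B_1\sqcup B_2$ with $\tfrac14|A|\le|B_i|\le\tfrac34|A|$ for $i=1,2$ (a minimum over an empty set being $+\infty$). *)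

From HB Require Import structures.
From mathcomp Require Import all_boot all_order.
From mathcomp Require Import finmap.
From mathcomp Require Import boolp.
Set Implicit Arguments. Unset Strict Implicit. Unset Printing Implicit Defensive.
Local Open Scope fset_scope.

Section Graph.
Variables (V : choiceType) (e : rel V).

Definition ecut (B1 B2 : {fset V}) : nat :=
  \sum_(x <- B1) \sum_(y <- B2) (e x y : nat).

Definition sweepout (A : {fset V}) (F : nat -> {fset V}) : Prop :=
  [/\ F 0%N = fset0,
      (forall j, (j < #|` A|)%N -> F j `<=` F j.+1),
      (forall j, (j <= #|` A|)%N -> #|` F j| = j)
    & F #|` A| = A].

Definition width (A : {fset V}) (F : nat -> {fset V}) : nat :=
  \max_(j < (#|` A|).+1) ecut (F j) (A `\` F j).

Definition is_sw_width (A : {fset V}) (w : nat) : bool :=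
  `[< exists F, sweepout A F /\ width A F = w >].

(* sw(A) = minimum width over all sweepouts of A (0 if none existed, which
   never happens). *)
Definition sw (A : {fset V}) : nat :=
  match pselect (exists w, is_sw_width A w) with
  | left h => ex_minn h
  | right _ => 0%N
  end.

Definition bisection (A B1 B2 : {fset V}) : Prop :=
  [/\ B1 `|` B2 = A, [disjoint B1 & B2],
      (#|` A| <= 4 * #|` B1| <= 3 * #|` A|)%N
    & (#|` A| <= 4 * #|` B2| <= 3 * #|` A|)%N].

Definition is_bisec_value (A : {fset V}) (b : nat) : bool :=
  `[< exists B1 B2, bisection A B1 B2 /\ ecut B1 B2 = b >].

(* Bisec(A) in nat extended by +oo, encoded as option nat (None = +oo,
   the minimum over an empty set). *)
Definition Bisec (A : {fset V}) : option nat :=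
  match pselect (exists b, is_bisec_value A b) with
  | left h => Some (ex_minn h)
  | right _ => None
  end.

End Graph.

(** Take a bisection [A = B1 ⊔ B2] realising [Bisec A] and optimal sweepouts
    of [B1] and [B2].  Sweeping out all of [B1] first and then all of [B2]
    gives a sweepout of [A] each of whose cuts is a cut of [B1] or of [B2]
    plus at most the edges between [B1] and [B2]; so
    [sw A <= Bisec A + max (sw B1) (sw B2)], and [B] is the part with the
    larger [sw]. *)
From mathcomp Require Import all_boot.
From mathcomp Require Import finmap.
From mathcomp Require Import boolp.
From mathcomp Require Import zify.
Local Open Scope fset_scope.

Section FsetSums.
Set Implicit Arguments. Unset Strict Implicit.
Variable I : choiceType.

Lemma big_fsetU_disjoint (R : Type) (idx : R) (op : Monoid.com_law idx)
    (F : I -> R) (A B : {fset I}) :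
  [disjoint A & B] ->
  \big[op/idx]_(x <- A `|` B) F x
    = op (\big[op/idx]_(x <- A) F x) (\big[op/idx]_(x <- B) F x).
Proof.
move=> /fdisjointP dAB; rewrite (big_fsetID _ (mem A)); congr (op _ _).
  by apply: eq_fbigl => x; rewrite !inE /=; case: (x \in A); rewrite ?andbF.
apply: eq_fbigl => x; rewrite !inE /=.
by case xA: (x \in A); rewrite ?andbT //= (negbTE (dAB x xA)).
Qed.

Lemma leq_sum_fsubset (f : I -> nat) (A B : {fset I}) :
  A `<=` B -> (\sum_(x <- A) f x <= \sum_(x <- B) f x)%N.
Proof.
move=> sAB; have -> : \sum_(x <- A) f x = \sum_(x <- [fset x in B | x \in A]) f x.
  apply: eq_fbigl => x; rewrite !inE /= andbC.
  by case xA: (x \in A); rewrite //= (fsubsetP sAB).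
by rewrite [leqRHS](big_fsetID _ (mem A)) leq_addr.
Qed.

Lemma cardfsU_disjoint (A B : {fset I}) :
  [disjoint A & B] -> #|` A `|` B| = (#|` A| + #|` B|)%N.
Proof. by move=> dAB; rewrite cardfsU disjoint_fsetI0 // cardfs0 subn0. Qed.

End FsetSums.

Section Sweepouts.
Set Implicit Arguments. Unset Strict Implicit.
Variables (V : choiceType) (e : rel V).

Lemma ecutUl (A1 A2 B : {fset V}) : [disjoint A1 & A2] ->
  ecut e (A1 `|` A2) B = (ecut e A1 B + ecut e A2 B)%N.
Proof. exact: big_fsetU_disjoint. Qed.

Lemma ecutUr (A B1 B2 : {fset V}) : [disjoint B1 & B2] ->
  ecut e A (B1 `|` B2) = (ecut e A B1 + ecut e A B2)%N.
Proof.
move=> dB; rewrite /ecut -big_split /=.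
by apply: eq_bigr => x _; rewrite big_fsetU_disjoint.
Qed.

Lemma ecutSS (A A' B B' : {fset V}) :
  A `<=` A' -> B `<=` B' -> (ecut e A B <= ecut e A' B')%N.
Proof.
move=> sA sB; rewrite /ecut; apply: (leq_trans _ (leq_sum_fsubset _ sA)).
by apply: leq_sum => x _; apply: leq_sum_fsubset.
Qed.

Lemma sweepout_exists (A : {fset V}) : exists F, sweepout A F.
Proof.
pose s := enum_fset A.
exists (fun j => [fset x in take j s]); split.
- by apply/fsetP => x; rewrite !inE take0.
- move=> j _; apply/fsubsetP => x; rewrite !inE -(take_takel _ (leqnSn j)).
  exact: mem_take.
- move=> j jA; rewrite card_fseq undup_id ?take_uniq ?fset_uniq //.
  by rewrite size_take; case: ltngtP jA => // ->.
- by apply/fsetP => x; rewrite !inE take_oversize.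
Qed.

Lemma sweepoutS (A : {fset V}) F i j : sweepout A F ->
  (i <= j)%N -> (j <= #|` A|)%N -> F i `<=` F j.
Proof.
case=> _ Fnested _ _; elim: j => [|j IHj]; first by rewrite leqn0 => /eqP ->.
rewrite leq_eqVlt ltnS => /predU1P [-> //|ij] jA.
exact: fsubset_trans (IHj ij (ltnW jA)) (Fnested j jA).
Qed.

Lemma sweepout_sub (A : {fset V}) F j : sweepout A F ->
  (j <= #|` A|)%N -> F j `<=` A.
Proof.
by move=> sF jA; have [_ _ _ <-] := sF; apply: sweepoutS sF jA _.
Qed.

Lemma leq_cut_width (A : {fset V}) F j : (j <= #|` A|)%N ->
  (ecut e (F j) (A `\` F j) <= width e A F)%N.
Proof.
move=> jA; rewrite -ltnS in jA; rewrite /width.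
exact: (@leq_bigmax _ (fun i : 'I_(#|` A|).+1 => ecut e (F i) (A `\` F i))
                   (Ordinal jA)).
Qed.

Lemma sw_le_width (A : {fset V}) F : sweepout A F -> (sw e A <= width e A F)%N.
Proof.
move=> sF; rewrite /sw; case: pselect => [h|[]]; last first.
  by exists (width e A F); apply/asboolP; exists F.
by case: ex_minnP => m _; apply; apply/asboolP; exists F.
Qed.

Lemma sw_attained (A : {fset V}) : exists2 F, sweepout A F & width e A F = sw e A.
Proof.
have [F sF] := sweepout_exists A.
rewrite /sw; case: pselect => [h|[]]; last first.
  by exists (width e A F); apply/asboolP; exists F.
by case: ex_minnP => m /asboolP [G [sG wG]] _; exists G.
Qed.

Section Concatenation.
Variables (B1 B2 : {fset V}) (G1 G2 : nat -> {fset V}).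
Hypotheses (dB : [disjoint B1 & B2])
  (sG1 : sweepout B1 G1) (sG2 : sweepout B2 G2).

Definition catsweep (j : nat) : {fset V} :=
  if (j < #|` B1|)%N then G1 j else B1 `|` G2 (j - #|` B1|).

Let disjoint_G2 k : (k <= #|` B2|)%N -> [disjoint B1 & G2 k].
Proof. by move=> kB2; apply: fdisjointWr dB; apply: sweepout_sub sG2 kB2. Qed.

Lemma sweepout_cat : sweepout (B1 `|` B2) catsweep.
Proof.
have [G10 G1nested G1card G1end] := sG1.
have [G20 G2nested G2card G2end] := sG2.
rewrite /catsweep; split.
- case: ifP => //; rewrite cardfs_gt0 => /negbFE/eqP ->.
  by rewrite G20 fsetU0.
- move=> j; rewrite cardfsU_disjoint // => jB.
  case: (ltnP j #|` B1|) => j1; case: (ltnP j.+1 #|` B1|) => j1'.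
  + exact: G1nested.
  + have Ej : j.+1 = #|` B1| by apply/eqP; rewrite eqn_leq j1 j1'.
    by rewrite Ej subnn G20 fsetU0 -G1end -Ej; apply: G1nested.
  + by lia.
  + by apply: fsetUS; rewrite subSn //; apply: G2nested; lia.
- move=> j; rewrite cardfsU_disjoint // => jB.
  case: ltnP => j1; first by rewrite G1card // ltnW.
  by rewrite cardfsU_disjoint ?disjoint_G2 ?G2card; lia.
- by rewrite cardfsU_disjoint // ltnNge leq_addr /= addKn G2end.
Qed.

Let cut_cat_low j : (j < #|` B1|)%N ->
  (ecut e (G1 j) ((B1 `|` B2) `\` G1 j)
     <= ecut e B1 B2 + ecut e (G1 j) (B1 `\` G1 j))%N.
Proof.
move=> j1; have sG1j : G1 j `<=` B1 := sweepout_sub sG1 (ltnW j1).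
have dG1jB2 : [disjoint B2 & G1 j].
  by apply: fdisjointWr sG1j _; rewrite fdisjoint_sym.
rewrite fsetDUl (fsetDidPl _ _ dG1jB2) ecutUr; last first.
  by apply: fdisjointWl dB; apply: fsubsetDl.
by rewrite addnC leq_add2r ecutSS.
Qed.

Let cut_cat_high k : (k <= #|` B2|)%N ->
  (ecut e (B1 `|` G2 k) ((B1 `|` B2) `\` (B1 `|` G2 k))
     <= ecut e B1 B2 + ecut e (G2 k) (B2 `\` G2 k))%N.
Proof.
move=> kB2; have -> : (B1 `|` B2) `\` (B1 `|` G2 k) = B2 `\` G2 k.
  rewrite fsetDUl !fsetDUr fsetDv fset0I fset0U.
  by rewrite (fsetDidPl _ _ _) 1?fdisjoint_sym // (fsetIidPr _) ?fsubsetDl.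
by rewrite ecutUl ?disjoint_G2 // leq_add2r ecutSS ?fsubsetDl.
Qed.

Lemma width_cat : (width e (B1 `|` B2) catsweep
  <= ecut e B1 B2 + maxn (width e B1 G1) (width e B2 G2))%N.
Proof.
apply/bigmax_leqP => [[j jB]] _ /=; rewrite /catsweep.
case: ltnP => j1.
  apply: leq_trans (cut_cat_low j1) _; rewrite leq_add2l.
  exact: leq_trans (leq_cut_width _ (ltnW j1)) (leq_maxl _ _).
have kB2 : (j - #|` B1| <= #|` B2|)%N by rewrite cardfsU_disjoint // in jB; lia.
apply: leq_trans (cut_cat_high kB2) _; rewrite leq_add2l.
exact: leq_trans (leq_cut_width _ kB2) (leq_maxr _ _).
Qed.

End Concatenation.

Lemma sw_fsetU_disjoint (B1 B2 : {fset V}) : [disjoint B1 & B2] ->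
  (sw e (B1 `|` B2) <= ecut e B1 B2 + maxn (sw e B1) (sw e B2))%N.
Proof.
move=> dB; have [G1 sG1 <-] := sw_attained B1; have [G2 sG2 <-] := sw_attained B2.
apply: leq_trans (sw_le_width (sweepout_cat dB sG1 sG2)) _.
exact: width_cat.
Qed.

End Sweepouts.

Theorem lemma2p5 (V : choiceType) (e : rel V)
  (e_sym : symmetric e) (e_irr : irreflexive e) (A : {fset V}) :
  exists B : {fset V},
    [/\ B `<=` A, (4 * #|` B| <= 3 * #|` A|)%N &
        match Bisec e A with
        | Some b => (sw e A <= b + sw e B)%N
        | None => True
        end].
Proof.
rewrite /Bisec; case: pselect => [h|_]; last first.
  by exists fset0; split; rewrite ?fsub0set ?cardfs0.
case: ex_minnP => b /asboolP [B1 [B2 [[<- dB /andP[_ B1le] /andP[_ B2le]] <-]]] _.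
have sw_split := sw_fsetU_disjoint e dB.
case: (leqP (sw e B1) (sw e B2)) => [/maxn_idPr|/ltnW/maxn_idPl] sw_max;
  rewrite sw_max in sw_split.
- by exists B2; rewrite fsubsetUr.
- by exists B1; rewrite fsubsetUl.
Qed.
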